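(* The system (MNW) has a seventh-order generalized symmetry with characteristic $Q_{1,1}=\mathcal{R}(Q_1)=(Q^1_{1,1},Q^2_{1,1})^T$, where $Q_1=(u_1,v_1)^T$ and $Q_{1,1}^1= u_7-\frac{42}{5}uu_5+\frac{126}{5}u_1^3-\frac{126}{5}u_1v_1^2-\frac{147}{5}u_1u_4-\frac{1386}{25}v_2u_1v+\frac{2268}{25}uu_1u_2+\frac{1512}{125}uv^2u_1-\frac{2016}{125}u^3u_1-\frac{252}{125}v^3u_1+\frac{1512}{125}v_1vu^2+\frac{504}{25}u^2u_3-\frac{756}{25}uvv_3-\frac{756}{125}v^2uv_1-\frac{756}{25}uv_1v_2+\frac{252}{25}v^2v_3+\frac{84}{5}v_2v_3+21v_1v_4+\frac{84}{5}vv_5-\frac{252}{5}u_2u_3-\frac{252}{25}v^2u_3+\frac{126}{25}v_1^3-\frac{1134}{25}v_1u_2v+\frac{756}{25}vv_1v_2$, $Q_{1,1}^2= -27v_7-\frac{756}{25}v_2u_1v+\frac{252}{25}v^2v_3+\frac{126}{25}v_1^3+189v_4u_1+\frac{483}{5}u_4v_1-\frac{378}{5}u_1^2v_1+\frac{1386}{5}u_2v_3-\frac{756}{5}v_2v_3-\frac{252}{125}v^3v_1-\frac{756}{25}uvu_3-\frac{756}{25}v_1u_2v+\frac{1512}{25}uv_1v_2+\frac{882}{25}vv_1v_2-\frac{1134}{25}u_1vu_2+\frac{378}{25}u_1v_1^2+\frac{378}{5}v_5u-\frac{252}{25}v^2u_3-\frac{3024}{25}u_2uv_1-\frac{378}{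5}v_1v_4-\frac{4536}{25}v_2u_1u+\frac{1008}{125}u^3v_1+\frac{756}{125}uv^2u_1-\frac{1512}{25}u^2v_3+\frac{1134}{5}u_3v_2+\frac{1512}{125}u^2u_1v+\frac{84}{5}u_5v$.
   Context: (MNW) is the system $u_t = -\tfrac{5}{3}u_5-10vv_3-15v_1v_2+10uu_3+25u_1u_2-6v^2v_1+6v^2u_1+12uvv_1-12u^2u_1$, $v_t = 15v_5+30v_1v_2-30v_3u-45v_2u_1-35v_1u_2-10vu_3-6v^2v_1+6v^2u_1+12u^2v_1+12vuu_1$, with $u_i=\partial^i u/\partial x^i$, $v_j=\partial^j v/\partial x^j$. A characteristic $Q$ defines a generalized symmetry if $D_tQ=F'[Q]$ on solutions, $F$ the right-hand side of (MNW) and $F'$ its Fréchet derivative. $D_x$ is the total $x$-derivative, $D_x^{-1}$ its formal inverse; $aD_x^{-1}\circ b$ acts as $f\mapsto aD_x^{-1}(bf)$. $\mathcal{R}=\mathcal{P}\circ\mathcal{S}$ with $$\mathcal{P}=\begin{pmatrix} D_x^3-\frac{6}{5}uD_x-\frac{3}{5}u_1 & -\frac{6}{5}vD_x-\frac{3}{5}v_1\\ -\frac{6}{5}vD_x-\frac{3}{5}v_1 & 3D_x^3-(\frac{18}{5}u+\frac{12}{5}v)D_x-\frac{9}{5}u_1-\frac{6}{5}v_1 \end{pmatrix},$$ $$\mathcal{S}=\begin{pmatrix} S_{11}+\frac{6}{5}\gamma_{21}D_x^{-1}\circ \gamma_{11} +\frac{6}{5}D_x^{-1}\circ \gamma_{21}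 & S_{12}+\frac{6}{5}\gamma_{21}D_x^{-1}\circ \gamma_{12} +\frac{6}{5}D_x^{-1}\circ \gamma_{22}\\ S_{21}+\frac{6}{5}\gamma_{22}D_x^{-1}\circ \gamma_{11} & S_{22}+\frac{6}{5}\gamma_{22}D_x^{-1}\circ \gamma_{12} \end{pmatrix},$$ where $S_{11}=-D_x^3+6uD_x+3u_1$, $S_{12}=-6vD_x+3v_1$, $S_{21}=-6vD_x-9v_1$, $S_{22}=9D_x^3-(\frac{54}{5}u-\frac{36}{5}v)D_x-\frac{27}{5}u_1+\frac{18}{5}v_1$, $\gamma_{11}=1$, $\gamma_{12}=0$, $\gamma_{21}=u_2-\frac{12}{5}u^2+\frac{6}{5}v^2$, $\gamma_{22}=-\frac{6}{5}v^2+\frac{12}{5}uv-3v_2$. *)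

From Stdlib Require Import Reals Lra.
Open Scope R_scope.

(** Differential polynomials in two dependent variables u, v (x-independent),
    as syntax trees; [U i] is u_i = d^i u/dx^i, [V j] is v_j. *)
Inductive dexp : Type :=
| C : R -> dexp
| U : nat -> dexp
| V : nat -> dexp
| Add : dexp -> dexp -> dexp
| Mul : dexp -> dexp -> dexp.

Definition Opp (a : dexp) : dexp := Mul (C (-1)) a.
Definition Sub (a b : dexp) : dexp := Add a (Opp b).

Declare Scope dexp_scope.
Delimit Scope dexp_scope with D.
Infix "+" := Add : dexp_scope.
Infix "-" := Sub : dexp_scope.
Infix "*" := Mul : dexp_scope.
Notation "- a" := (Opp a) : dexp_scope.

Fixpoint eval (uu vv : nat -> R) (e : dexp) : R :=
  match e with
  | C r => r
  | U i => uu i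
  | V j => vv j
  | Add a b => eval uu vv a + eval uu vv b
  | Mul a b => eval uu vv a * eval uu vv b
  end.

(** Equality of differential polynomials (as functions on the jet space;
    over R this is the same as equality of polynomials). *)
Definition deq (a b : dexp) : Prop := forall uu vv : nat -> R, eval uu vv a = eval uu vv b.

Fixpoint Dx (e : dexp) : dexp :=
  match e with
  | C _ => C 0
  | U i => U (S i)
  | V j => V (S j)
  | Add a b => Add (Dx a) (Dx b)
  | Mul a b => Add (Mul (Dx a) b) (Mul a (Dx b))
  end.

Fixpoint Dxn (n : nat) (e : dexp) : dexp :=
  match n with O => e | S k => Dx (Dxn k e) end.

Fixpoint dU (n : nat) (e : dexp) : dexp :=
  match e with
  | C _ => C 0
  | U i => if Nat.eqb i n then C 1 else C 0
  | V _ => C 0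
  | Add a b => Add (dU n a) (dU n b)
  | Mul a b => Add (Mul (dU n a) b) (Mul a (dU n b))
  end.

Fixpoint dV (n : nat) (e : dexp) : dexp :=
  match e with
  | C _ => C 0
  | U _ => C 0
  | V j => if Nat.eqb j n then C 1 else C 0
  | Add a b => Add (dV n a) (dV n b)
  | Mul a b => Add (Mul (dV n a) b) (Mul a (dV n b))
  end.

Fixpoint ord (e : dexp) : nat :=
  match e with
  | C _ => O
  | U i => i
  | V j => j
  | Add a b => Nat.max (ord a) (ord b)
  | Mul a b => Nat.max (ord a) (ord b)
  end.

Fixpoint dsum (N : nat) (f : nat -> dexp) : dexp :=
  match N with
  | O => f O
  | S k => Add (dsum k f) (f (S k))
  end.

Definition frechet1 (G K1 K2 : dexp) : dexp :=
  dsum (ord G) (fun i => Add (Mul (dU i G) (Dxn i K1)) (Mul (dV i G) (Dxn i K2))).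

Definition vec := (dexp * dexp)%type.

Definition frechet (G K : vec) : vec :=
  (frechet1 (fst G) (fst K) (snd K), frechet1 (snd G) (fst K) (snd K)).

Definition vdeq (a b : vec) : Prop := deq (fst a) (fst b) /\ deq (snd a) (snd b).

Definition u (i : nat) := U i.
Definition v (j : nat) := V j.

Definition MNW_F1 : dexp :=
  (C (-5/3) * u 5 - C 10 * v 0 * v 3 - C 15 * v 1 * v 2 + C 10 * u 0 * u 3
   + C 25 * u 1 * u 2 - C 6 * v 0 * v 0 * v 1 + C 6 * v 0 * v 0 * u 1
   + C 12 * u 0 * v 0 * v 1 - C 12 * u 0 * u 0 * u 1)%D.

Definition MNW_F2 : dexp :=
  (C 15 * v 5 + C 30 * v 1 * v 2 - C 30 * v 3 * u 0 - C 45 * v 2 * u 1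
   - C 35 * v 1 * u 2 - C 10 * v 0 * u 3 - C 6 * v 0 * v 0 * v 1
   + C 6 * v 0 * v 0 * u 1 + C 12 * u 0 * u 0 * v 1 + C 12 * v 0 * u 0 * u 1)%D.

Definition MNW_F : vec := (MNW_F1, MNW_F2).

(** Generalized symmetry: D_t Q = F'[Q] on solutions.  On solutions of the
    evolution system u_t = F1, v_t = F2 (with Q not depending explicitly on
    x, t), D_t Q = Q'[F]. *)
Definition is_gen_symmetry (Q : vec) : Prop :=
  vdeq (frechet Q MNW_F) (frechet MNW_F Q).

(** Formal inverse of D_x: [A] is D_x^{-1} f, i.e. D_x A = f, normalised
    with zero integration constant (A vanishes at the zero jet). *)
Definition is_Dxinv (A f : dexp) : Prop :=
  deq (Dx A) f /\ eval (fun _ => 0) (fun _ => 0) A = 0.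

Definition gam11 : dexp := C 1.
Definition gam12 : dexp := C 0.
Definition gam21 : dexp := (u 2 - C (12/5) * u 0 * u 0 + C (6/5) * v 0 * v 0)%D.
Definition gam22 : dexp := (- (C (6/5) * v 0 * v 0) + C (12/5) * u 0 * v 0 - C 3 * v 2)%D.

(** Action of the operator S on Q = (Q1,Q2), where A = D_x^{-1}(gam11 Q1 + gam12 Q2)
    and B = D_x^{-1}(gam21 Q1 + gam22 Q2). *)
Definition S_app (Q : vec) (A B : dexp) : vec :=
  let q1 := fst Q in let q2 := snd Q in
  ( (- Dxn 3 q1 + C 6 * u 0 * Dx q1 + C 3 * u 1 * q1
     + (- (C 6 * v 0 * Dx q2) + C 3 * v 1 * q2)
     + C (6/5) * gam21 * A + C (6/5) * B)%D,
    (- (C 6 * v 0 * Dx q1) - C 9 * v 1 * q1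
     + (C 9 * Dxn 3 q2 - (C (54/5) * u 0 - C (36/5) * v 0) * Dx q2
        - C (27/5) * u 1 * q2 + C (18/5) * v 1 * q2)
     + C (6/5) * gam22 * A)%D ).

Definition P_app (W : vec) : vec :=
  let w1 := fst W in let w2 := snd W in
  ( (Dxn 3 w1 - C (6/5) * u 0 * Dx w1 - C (3/5) * u 1 * w1
     - C (6/5) * v 0 * Dx w2 - C (3/5) * v 1 * w2)%D,
    (- (C (6/5) * v 0 * Dx w1) - C (3/5) * v 1 * w1
     + C 3 * Dxn 3 w2 - (C (18/5) * u 0 + C (12/5) * v 0) * Dx w2
     - C (9/5) * u 1 * w2 - C (6/5) * v 1 * w2)%D ).

(** [R_app Q W]: W = R(Q) = P(S(Q)), where the nonlocal terms D_x^{-1}(...)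
    exist (as differential polynomials) and are normalised as above. *)
Definition R_app (Q W : vec) : Prop :=
  exists A B : dexp,
    is_Dxinv A (gam11 * fst Q + gam12 * snd Q)%D /\
    is_Dxinv B (gam21 * fst Q + gam22 * snd Q)%D /\
    vdeq (P_app (S_app Q A B)) W.

Definition Q_1 : vec := (u 1, v 1).

Definition Q11_1 : dexp :=
  (u 7 - C (42/5) * u 0 * u 5 + C (126/5) * u 1 * u 1 * u 1
   - C (126/5) * u 1 * v 1 * v 1 - C (147/5) * u 1 * u 4
   - C (1386/25) * v 2 * u 1 * v 0 + C (2268/25) * u 0 * u 1 * u 2
   + C (1512/125) * u 0 * v 0 * v 0 * u 1 - C (2016/125) * u 0 * u 0 * u 0 * u 1
   - C (252/125) * v 0 * v 0 * v 0 * u 1 + C (1512/125) * v 1 * v 0 * u 0 * u 0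
   + C (504/25) * u 0 * u 0 * u 3 - C (756/25) * u 0 * v 0 * v 3
   - C (756/125) * v 0 * v 0 * u 0 * v 1 - C (756/25) * u 0 * v 1 * v 2
   + C (252/25) * v 0 * v 0 * v 3 + C (84/5) * v 2 * v 3 + C 21 * v 1 * v 4
   + C (84/5) * v 0 * v 5 - C (252/5) * u 2 * u 3 - C (252/25) * v 0 * v 0 * u 3
   + C (126/25) * v 1 * v 1 * v 1 - C (1134/25) * v 1 * u 2 * v 0
   + C (756/25) * v 0 * v 1 * v 2)%D.

Definition Q11_2 : dexp :=
  (- (C 27 * v 7) - C (756/25) * v 2 * u 1 * v 0 + C (252/25) * v 0 * v 0 * v 3
   + C (126/25) * v 1 * v 1 * v 1 + C 189 * v 4 * u 1 + C (483/5) * u 4 * v 1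
   - C (378/5) * u 1 * u 1 * v 1 + C (1386/5) * u 2 * v 3 - C (756/5) * v 2 * v 3
   - C (252/125) * v 0 * v 0 * v 0 * v 1 - C (756/25) * u 0 * v 0 * u 3
   - C (756/25) * v 1 * u 2 * v 0 + C (1512/25) * u 0 * v 1 * v 2
   + C (882/25) * v 0 * v 1 * v 2 - C (1134/25) * u 1 * v 0 * u 2
   + C (378/25) * u 1 * v 1 * v 1 + C (378/5) * v 5 * u 0
   - C (252/25) * v 0 * v 0 * u 3 - C (3024/25) * u 2 * u 0 * v 1
   - C (378/5) * v 1 * v 4 - C (4536/25) * v 2 * u 1 * u 0
   + C (1008/125) * u 0 * u 0 * u 0 * v 1 + C (756/125) * u 0 * v 0 * v 0 * u 1
   - C (1512/25) * u 0 * u 0 * v 3 + C (1134/5) * u 3 * v 2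
   + C (1512/125) * u 0 * u 0 * u 1 * v 0 + C (84/5) * u 5 * v 0)%D.

Definition Q11 : vec := (Q11_1, Q11_2).

Definition vopp (a : vec) : vec := (Opp (fst a), Opp (snd a)).

From Stdlib Require Import Reals QArith Qreals Ring_polynom Lia.
Open Scope R_scope.

(* Both claims are identities between explicit differential polynomials with
   rational coefficients.  Mirroring [dexp] by expressions with coefficients in
   [Q], on which D_x, the partial derivatives and the Fréchet derivative
   compute, they are decided by normalising both sides with the reflexive
   normaliser of [ring].  For R(Q_1) the nonlocal terms are local:
   D_x^{-1}(u_1) = u, and D_x^{-1}(gam21 u_1 + gam22 v_1) is the cubic [B_Q1]. *)

Inductive qexp : Type :=
| qC : Q -> qexp
| qU : nat -> qexp
| qV : nat -> qexp
| qAdd : qexp -> qexp -> qexp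
| qMul : qexp -> qexp -> qexp.

(* Equal to [Q2R], but [Q2R_lit (z # d)] reduces to the real numeral [z / d]
   (or [z] when [d = 1]) exactly as Rocq parses it, so reified constants
   convert back to the original terms. *)
Definition Q2R_lit (q : Q) : R :=
  match Qden q with
  | xH => IZR (Qnum q)
  | d => IZR (Qnum q) / IZR (Zpos d)
  end.

Lemma Q2R_litE (q : Q) : Q2R_lit q = Q2R q.
Proof. unfold Q2R_lit, Q2R; destruct (Qden q); simpl; try reflexivity; field. Qed.

Fixpoint dexp_of (e : qexp) : dexp :=
  match e with
  | qC q => C (Q2R_lit q)
  | qU i => U i
  | qV j => V j
  | qAdd a b => Add (dexp_of a) (dexp_of b)
  | qMul a b => Mul (dexp_of a) (dexp_of b)
  end.

Fixpoint qDx (e : qexp) : qexp :=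
  match e with
  | qC _ => qC 0
  | qU i => qU (S i)
  | qV j => qV (S j)
  | qAdd a b => qAdd (qDx a) (qDx b)
  | qMul a b => qAdd (qMul (qDx a) b) (qMul a (qDx b))
  end.

Fixpoint qDxn (n : nat) (e : qexp) : qexp :=
  match n with O => e | S k => qDx (qDxn k e) end.

Fixpoint qdU (n : nat) (e : qexp) : qexp :=
  match e with
  | qC _ | qV _ => qC 0
  | qU i => if Nat.eqb i n then qC 1 else qC 0
  | qAdd a b => qAdd (qdU n a) (qdU n b)
  | qMul a b => qAdd (qMul (qdU n a) b) (qMul a (qdU n b))
  end.

Fixpoint qdV (n : nat) (e : qexp) : qexp :=
  match e with
  | qC _ | qU _ => qC 0
  | qV j => if Nat.eqb j n then qC 1 else qC 0
  | qAdd a b => qAdd (qdV n a) (qdV n b)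
  | qMul a b => qAdd (qMul (qdV n a) b) (qMul a (qdV n b))
  end.

Fixpoint qord (e : qexp) : nat :=
  match e with
  | qC _ => O
  | qU i | qV i => i
  | qAdd a b | qMul a b => Nat.max (qord a) (qord b)
  end.

Fixpoint qdsum (N : nat) (f : nat -> qexp) : qexp :=
  match N with O => f O | S k => qAdd (qdsum k f) (f (S k)) end.

Definition qfrechet1 (G K1 K2 : qexp) : qexp :=
  qdsum (qord G)
    (fun i => qAdd (qMul (qdU i G) (qDxn i K1)) (qMul (qdV i G) (qDxn i K2))).

Lemma Dx_dexp_of (e : qexp) : Dx (dexp_of e) = dexp_of (qDx e).
Proof. induction e; simpl; try reflexivity; congruence. Qed.

Lemma Dxn_dexp_of (n : nat) (e : qexp) : Dxn n (dexp_of e) = dexp_of (qDxn n e).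
Proof. induction n; simpl; rewrite ?IHn, ?Dx_dexp_of; reflexivity. Qed.

Lemma dU_dexp_of (n : nat) (e : qexp) : dU n (dexp_of e) = dexp_of (qdU n e).
Proof. induction e; simpl; try destruct (Nat.eqb _ n); try reflexivity; congruence. Qed.

Lemma dV_dexp_of (n : nat) (e : qexp) : dV n (dexp_of e) = dexp_of (qdV n e).
Proof. induction e; simpl; try destruct (Nat.eqb _ n); try reflexivity; congruence. Qed.

Lemma ord_dexp_of (e : qexp) : ord (dexp_of e) = qord e.
Proof. induction e; simpl; try reflexivity; congruence. Qed.

Lemma dsum_dexp_of (N : nat) (f : nat -> dexp) (g : nat -> qexp) :
  (forall i, f i = dexp_of (g i)) -> dsum N f = dexp_of (qdsum N g).
Proof. intro Hfg; induction N; simpl; congruence. Qed.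

Lemma frechet1_dexp_of (G K1 K2 : qexp) :
  frechet1 (dexp_of G) (dexp_of K1) (dexp_of K2) = dexp_of (qfrechet1 G K1 K2).
Proof.
  unfold frechet1, qfrechet1; rewrite ord_dexp_of; apply dsum_dexp_of; intro i.
  rewrite dU_dexp_of, dV_dexp_of, !Dxn_dexp_of; reflexivity.
Qed.

Lemma BinList_nth_of_succ_nat {A : Type} (d : A) (k : nat) (l : list A) :
  BinList.nth d (Pos.of_succ_nat k) l = List.nth k l d.
Proof.
  assert (nth_succ : forall p l', BinList.nth d (Pos.succ p) l' = BinList.nth d p (List.tl l')).
  { induction p as [p IHp|p IHp|]; intros l'; simpl; try reflexivity.
    rewrite IHp, BinList.jump_succ; simpl; rewrite !BinList.jump_tl; reflexivity. }
  revert l; induction k as [|k IHk]; intro l; simpl.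
  - destruct l; reflexivity.
  - rewrite nth_succ, IHk; destruct l as [|x l]; [destruct k |]; reflexivity.
Qed.

(* The jet list [u_0; v_0; u_1; v_1; ...; u_(n-1); v_(n-1)]: u_i is the
   variable [Pos.of_succ_nat (2 * i)] and v_i is [Pos.of_succ_nat (2 * i + 1)]. *)
Fixpoint jet_env (uu vv : nat -> R) (n : nat) : list R :=
  match n with
  | O => nil
  | S m => uu O :: vv O :: jet_env (fun i => uu (S i)) (fun i => vv (S i)) m
  end.

Lemma nth_jet_env (uu vv : nat -> R) (n i : nat) : (i < n)%nat ->
  List.nth (2 * i) (jet_env uu vv n) 0 = uu i /\
  List.nth (2 * i + 1) (jet_env uu vv n) 0 = vv i.
Proof.
  revert uu vv n; induction i as [|i IHi]; intros uu vv [|n] Hin; try lia.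
  - split; reflexivity.
  - replace (2 * S i)%nat with (S (S (2 * i))) by lia; simpl.
    apply (IHi (fun k => uu (S k)) (fun k => vv (S k))); lia.
Qed.

Fixpoint PExpr_of (e : qexp) : PExpr Q :=
  match e with
  | qC q => PEc q
  | qU i => PEX _ (Pos.of_succ_nat (2 * i))
  | qV j => PEX _ (Pos.of_succ_nat (2 * j + 1))
  | qAdd a b => PEadd (PExpr_of a) (PExpr_of b)
  | qMul a b => PEmul (PExpr_of a) (PExpr_of b)
  end.

Definition PEeval_R (l : list R) (p : PExpr Q) : R :=
  PEeval 0 1 Rplus Rmult Rminus Ropp Q2R_lit id_phi_N (pow_N 1 Rmult) l p.

Lemma eval_PExpr_of (uu vv : nat -> R) (n : nat) (e : qexp) : (qord e < n)%nat ->
  eval uu vv (dexp_of e) = PEeval_R (jet_env uu vv n) (PExpr_of e).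
Proof.
  unfold PEeval_R; induction e as [q|i|j|a IHa b IHb|a IHa b IHb];
    cbn [eval dexp_of PExpr_of PEeval qord]; intro Hord;
    rewrite ?BinList_nth_of_succ_nat, ?IHa, ?IHb by lia; try reflexivity.
  - symmetry; apply (nth_jet_env uu vv n i Hord).
  - symmetry; apply (nth_jet_env uu vv n j Hord).
Qed.

(* Coefficient arithmetic is reduced at every step to keep the denominators
   of the normal forms small. *)
Definition Qred_add (a b : Q) : Q := Qred (a + b).
Definition Qred_mul (a b : Q) : Q := Qred (a * b).
Definition Qred_sub (a b : Q) : Q := Qred (a - b).
Definition Qred_opp (a : Q) : Q := Qred (- a).

Lemma Q2R_Qred (q : Q) : Q2R (Qred q) = Q2R q.
Proof. apply Qeq_eqR, Qred_correct. Qed.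

Lemma Q2R_lit_ring_morph :
  ring_morph 0 1 Rplus Rmult Rminus Ropp eq
    0%Q 1%Q Qred_add Qred_mul Qred_sub Qred_opp Qeq_bool Q2R_lit.
Proof.
  constructor; intros;
    unfold Qred_add, Qred_mul, Qred_sub, Qred_opp; rewrite !Q2R_litE, ?Q2R_Qred.
  - unfold Q2R; simpl; field.
  - unfold Q2R; simpl; field.
  - apply Q2R_plus.
  - apply Q2R_minus.
  - apply Q2R_mult.
  - apply Q2R_opp.
  - apply Qeq_eqR, Qeq_bool_eq; assumption.
Qed.

Definition Q_no_div (a b : Q) : Q * Q := (0%Q, a).

Lemma Q_no_div_theory : div_theory eq Qred_add Qred_mul Q2R_lit Q_no_div.
Proof.
  constructor; intros a b; unfold Q_no_div, Qred_add, Qred_mul; cbn [fst snd].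
  rewrite !Q2R_litE, Q2R_Qred, Q2R_plus, Q2R_Qred, Q2R_mult.
  replace (Q2R 0) with 0 by (unfold Q2R; simpl; field); ring.
Qed.

Definition normal_form (e : qexp) : Pol Q :=
  norm_subst 0%Q 1%Q Qred_add Qred_mul Qred_sub Qred_opp Qeq_bool Q_no_div 0 nil
    (PExpr_of e).

Definition qexp_eqb (a b : qexp) : bool :=
  Peq Qeq_bool (normal_form a) (normal_form b).

Lemma qexp_eqb_sound (a b : qexp) :
  qexp_eqb a b = true -> deq (dexp_of a) (dexp_of b).
Proof.
  intros Hab uu vv; set (n := S (Nat.max (qord a) (qord b))).
  rewrite !(eval_PExpr_of uu vv n) by lia.
  exact (ring_correct (Eqsth R) (Eq_ext Rplus Rmult Ropp)
           (Rth_ARth (Eqsth R) (Eq_ext Rplus Rmult Ropp) RTheory) Q2R_lit_ring_morph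
           (pow_N_th 1 Rmult (Eqsth R)) Q_no_div_theory 0
           (jet_env uu vv n) nil (PExpr_of a) (PExpr_of b) I Hab).
Qed.

Ltac reify_Q r :=
  lazymatch r with
  | IZR ?z / IZR (Zpos ?d) => constr:(Qmake z d)
  | IZR ?z => constr:(Qmake z 1)
  end.

(* Other heads (definitions, projections, [Sub], [u], ...) are unfolded one
   step; [Dx] and [Dxn] are mirrored unexpanded, their expansion being left to
   the conversion check of [change]. *)
Ltac reify e :=
  lazymatch e with
  | dexp_of ?t => t
  | C ?r => let q := reify_Q r in constr:(qC q)
  | U ?i => constr:(qU i)
  | V ?j => constr:(qV j)
  | Add ?a ?b => let x := reify a in let y := reify b in constr:(qAdd x y)
  | Mul ?a ?b => let x := reify a in let y := reify b in constr:(qMul x y)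
  | Dx ?a => let x := reify a in constr:(qDx x)
  | Dxn ?n ?a => let x := reify a in constr:(qDxn n x)
  | _ => let e' := eval red in e in reify e'
  end.

Ltac reify_constant c := let t := reify c in change c with (dexp_of t).

Ltac decide_deq :=
  lazymatch goal with
  | |- deq ?a ?b =>
      let x := reify a in let y := reify b in
      change (deq (dexp_of x) (dexp_of y));
      apply qexp_eqb_sound; vm_compute; reflexivity
  end.

Lemma is_gen_symmetry_Q11 : is_gen_symmetry Q11.
Proof.
  unfold is_gen_symmetry, vdeq, frechet, Q11, MNW_F; cbn [fst snd].
  reify_constant Q11_1; reify_constant Q11_2;
  reify_constant MNW_F1; reify_constant MNW_F2.
  rewrite !frechet1_dexp_of; split; decide_deq.
Qed.

Definition B_Q1 : dexp :=
  (C (1/2) * u 1 * u 1 - C (4/5) * u 0 * u 0 * u 0 + C (6/5) * u 0 * v 0 * v 0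
   - C (2/5) * v 0 * v 0 * v 0 - C (3/2) * v 1 * v 1)%D.

Lemma is_Dxinv_u0 : is_Dxinv (u 0) (gam11 * fst Q_1 + gam12 * snd Q_1)%D.
Proof. split; [intros uu vv; simpl; ring | reflexivity]. Qed.

Lemma is_Dxinv_B_Q1 : is_Dxinv B_Q1 (gam21 * fst Q_1 + gam22 * snd Q_1)%D.
Proof.
  split; [intros uu vv | ]; unfold B_Q1, gam21, gam22, Q_1, Sub, Opp, u, v; simpl; field.
Qed.

Lemma R_app_Q1 : R_app Q_1 (vopp Q11).
Proof.
  exists (u 0), B_Q1; split; [exact is_Dxinv_u0 | split; [exact is_Dxinv_B_Q1 |]].
  split; decide_deq.
Qed.

Theorem mainTheorem6 :
  is_gen_symmetry Q11 /\ R_app Q_1 (vopp Q11).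
Proof. exact (conj is_gen_symmetry_Q11 R_app_Q1). Qed.
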